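(* Let $n\ge2$ and consider the sequential distributive $n$-site phosphorylation system with positive rate constants $k_{\mathrm{on}_i},k_{\mathrm{off}_i},k_{\mathrm{cat}_i},\ell_{\mathrm{on}_i},\ell_{\mathrm{off}_i},\ell_{\mathrm{cat}_i}$ ($i=0,\dots,n-1$) and positive total amounts $S_{tot},E_{tot},F_{tot}$. Assume \[ S_{tot}>F_{tot}. \] Then there is a choice of rate constants for which the system is multistationary. More explicitly, for any choice of positive $k_{\mathrm{cat}_1},\ell_{\mathrm{cat}_1}$ satisfying \[ \frac{k_{\mathrm{cat}_1}}{\ell_{\mathrm{cat}_1}}>\max\left\{\frac{F_{tot}}{S_{tot}-F_{tot}},\frac{F_{tot}}{E_{tot}}\right\}, \] fix any values of the remaining rate constants and positive numbers $h_4,\dots,h_{2n+3}$ such that $i\,h_{n+5}<h_{i+3}$ for $i=1,\dots,n$ and $(i-1)\,h_{n+5}<h_{n+i+3}$ for $i\in\{1,3,4,\dots,n\}$. Then there exists $t_0>0$ such that for any $t\in(0,t_0)$ the system (with the same $S_{tot},E_{tot},F_{tot}$) is multistationary after the rescalings \[ k_{\mathrm{on}_0}\mapsto t^{h_{n+4}}k_{\mathrm{on}_0},\quad k_{\mathrm{on}_i}\mapsto t^{h_{n+4+i}-h_{i+3}}k_{\mathrm{on}_i}\ (i=1,\dots,n-1),\quad \ell_{\mathrm{on}_i}\mapsto t^{h_{n+4+i}-h_{i+4}}\ell_{\mathrm{on}_i}\ (i=0,\dots,n-1). \] Similarly, for any fixed choice of rate constants and total conservation constants satisfying the two displayed inequalities,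 there exist positive constants $M_1,\dots,M_{4n-2}$ such that for any positive $\gamma_1,\dots,\gamma_{2n}$ verifying \[ \gamma_i<M_i\ (i=1,\dots,2n),\qquad \frac{\gamma_i}{\gamma_{n+2}^{\,i}}<M_{2n+i}\ (i=1,\dots,n),\qquad \frac{\gamma_{n+i}}{\gamma_{n+2}^{\,i-1}}<M_{3n-2+i}\ (i=3,\dots,n), \] the rescaling \[ k_{\mathrm{on}_0}\mapsto\gamma_{n+1}k_{\mathrm{on}_0},\quad k_{\mathrm{on}_i}\mapsto\frac{\gamma_{n+1+i}}{\gamma_i}k_{\mathrm{on}_i}\ (i=1,\dots,n-1),\quad \ell_{\mathrm{on}_i}\mapsto\frac{\gamma_{n+1+i}}{\gamma_{i+1}}\ell_{\mathrm{on}_i}\ (i=0,\dots,n-1) \] (all other constants unchanged) gives rise to a multistationary system.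
   Context: The sequential distributive $n$-site phosphorylation network has species $S_0,\dots,S_n$ (substrate with $i$ phosphate groups), kinase $E$, phosphatase $F$, and intermediates $ES_0,\dots,ES_{n-1}$, $FS_1,\dots,FS_n$, with reactions $S_i+E\rightleftarrows ES_i$ (forward $k_{\mathrm{on}_i}$, backward $k_{\mathrm{off}_i}$), $ES_i\to S_{i+1}+E$ ($k_{\mathrm{cat}_i}$), $S_{i+1}+F\rightleftarrows FS_{i+1}$ (forward $\ell_{\mathrm{on}_i}$, backward $\ell_{\mathrm{off}_i}$), $FS_{i+1}\to S_i+F$ ($\ell_{\mathrm{cat}_i}$), $i=0,\dots,n-1$. With concentrations $s_0,\dots,s_n,e,f$, $y_i$ of $ES_i$ and $u_i$ of $FS_{i+1}$, the mass-action system is \[ \begin{aligned} \dot s_0&=-k_{\mathrm{on}_0}s_0e+k_{\mathrm{off}_0}y_0+\ell_{\mathrm{cat}_0}u_0,\\ \dot s_i&=k_{\mathrm{cat}_{i-1}}y_{i-1}-k_{\mathrm{on}_i}s_ie+k_{\mathrm{off}_i}y_i+\ell_{\mathrm{cat}_i}u_i-\ell_{\mathrm{on}_{i-1}}s_if+\ell_{\mathrm{off}_{i-1}}u_{i-1},\quad 1\le i\le n-1,\\ \dot s_n&=k_{\mathrm{cat}_{n-1}}y_{n-1}-\ell_{\mathrm{on}_{n-1}}s_nf+\ell_{\mathrm{off}_{n-1}}u_{n-1},\\ \dot y_i&=k_{\mathrm{on}_i}s_ie-(k_{\mathrm{off}_i}+k_{\mathrm{cat}_i})y_i,\quad \dot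 u_i=\ell_{\mathrm{on}_i}s_{i+1}f-(\ell_{\mathrm{off}_i}+\ell_{\mathrm{cat}_i})u_i,\quad 0\le i\le n-1,\\ \dot e&=-\textstyle\sum_i\dot y_i,\qquad \dot f=-\sum_i\dot u_i, \end{aligned} \] with conservation laws $\sum_{i=0}^ns_i+\sum_{i=0}^{n-1}y_i+\sum_{i=0}^{n-1}u_i=S_{tot}$, $e+\sum_iy_i=E_{tot}$, $f+\sum_iu_i=F_{tot}$. The system is multistationary (for given rate constants and totals) if there are at least two positive points (all concentrations $>0$) at which all right-hand sides vanish and the three conservation laws hold with the given $S_{tot},E_{tot},F_{tot}$. *)

From Stdlib Require Import Reals Lra Lia.
Open Scope R_scope.

Fixpoint sumR (m : nat) (g : nat -> R) : R :=
  match m with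
  | O => 0
  | S m' => sumR m' g + g m'
  end.

(* Rate constants are indexed 0..n-1; substrate
   concentrations s 0..s n; y i = [ES_i], u i = [FS_{i+1}], i = 0..n-1;
   e = [E], f = [F]. *)
Definition ds (n : nat) (kon koff kcat lon loff lcat : nat -> R)
  (s y u : nat -> R) (e f : R) (i : nat) : R :=
  if Nat.eqb i 0 then
    - kon 0%nat * s 0%nat * e + koff 0%nat * y 0%nat + lcat 0%nat * u 0%nat
  else if Nat.eqb i n then
    kcat (n-1)%nat * y (n-1)%nat - lon (n-1)%nat * s n * f
      + loff (n-1)%nat * u (n-1)%nat
  else
    kcat (i-1)%nat * y (i-1)%nat - kon i * s i * e + koff i * y i
      + lcat i * u i - lon (i-1)%nat * s i * f + loff (i-1)%nat * u (i-1)%nat.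

Definition dy (kon koff kcat : nat -> R) (s y : nat -> R) (e : R) (i : nat) : R :=
  kon i * s i * e - (koff i + kcat i) * y i.

Definition du (lon loff lcat : nat -> R) (s u : nat -> R) (f : R) (i : nat) : R :=
  lon i * s (S i) * f - (loff i + lcat i) * u i.

Definition pos_steady_state (n : nat) (kon koff kcat lon loff lcat : nat -> R)
  (Stot Etot Ftot : R) (s y u : nat -> R) (e f : R) : Prop :=
  (forall i, (i <= n)%nat -> 0 < s i) /\
  (forall i, (i < n)%nat -> 0 < y i /\ 0 < u i) /\
  0 < e /\ 0 < f /\
  (forall i, (i <= n)%nat -> ds n kon koff kcat lon loff lcat s y u e f i = 0) /\
  (forall i, (i < n)%nat -> dy kon koff kcat s y e i = 0 /\
                           du lon loff lcat s u f i = 0) /\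
  - sumR n (dy kon koff kcat s y e) = 0 /\
  - sumR n (du lon loff lcat s u f) = 0 /\
  sumR (S n) s + sumR n y + sumR n u = Stot /\
  e + sumR n y = Etot /\
  f + sumR n u = Ftot.

Definition distinct_points (n : nat) (s1 y1 u1 : nat -> R) (e1 f1 : R)
  (s2 y2 u2 : nat -> R) (e2 f2 : R) : Prop :=
  (exists i, (i <= n)%nat /\ s1 i <> s2 i) \/
  (exists i, (i < n)%nat /\ (y1 i <> y2 i \/ u1 i <> u2 i)) \/
  e1 <> e2 \/ f1 <> f2.

Definition multistationary (n : nat) (kon koff kcat lon loff lcat : nat -> R)
  (Stot Etot Ftot : R) : Prop :=
  exists (s1 y1 u1 : nat -> R) (e1 f1 : R) (s2 y2 u2 : nat -> R) (e2 f2 : R),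
    pos_steady_state n kon koff kcat lon loff lcat Stot Etot Ftot s1 y1 u1 e1 f1 /\
    pos_steady_state n kon koff kcat lon loff lcat Stot Etot Ftot s2 y2 u2 e2 f2 /\
    distinct_points n s1 y1 u1 e1 f1 s2 y2 u2 e2 f2.

Definition pos_rates (n : nat) (k : nat -> R) : Prop :=
  forall i, (i < n)%nat -> 0 < k i.

From Stdlib Require Import Reals Lra Lia Ranalysis5 Classical_Prop FunctionalExtensionality.
Open Scope R_scope.

(* At a steady state all binding and catalytic fluxes balance, so the state is
   determined by the ratio [x = e / f] of free kinase to free phosphatase, by
   [s0] and by [e]: [s_i = s0 * sratio i * x ^ i].  The kinase and phosphatase
   conservation laws give [s0 * e] and [e] as rational functions of [x], and
   substrate conservation becomes one scalar equation [resid x = 0].  As [resid]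
   is positive for large [x], a sign change from positive to negative yields one
   root before and one root after it: two distinct steady states.

   After the gamma-rescaling, at [x = w / gamma_(n+2)] each sum occurring in
   [resid] is dominated by a single term, and [resid / e] tends to
   [slope / w - gap] with [r = kcat_1 / lcat_1], [slope > 0] because
   [r > Ftot / Etot] and [gap = Stot - Ftot - Ftot / r > 0] because
   [r > Ftot / (Stot - Ftot)]; so the sign changes between [w_lo] and [w_hi].
   The power rescaling is the case [gamma_k = t ^ h_(k+3)], and one choice of
   exponents gives a multistationary system. *)

(** * Finite sums *)

Lemma sumR_ext m F G : (forall i, (i < m)%nat -> F i = G i) -> sumR m F = sumR m G.
Proof.
  induction m as [|m IH]; intros H; simpl; [reflexivity|].
  rewrite IH, H by (auto; lia). reflexivity.
Qed.

Lemma sumR_le m F G : (forall i, (i < m)%nat -> F i <= G i) -> sumR m F <= sumR m G.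
Proof.
  induction m as [|m IH]; intros H; simpl; [lra|].
  assert (F m <= G m) by (apply H; lia).
  assert (sumR m F <= sumR m G) by (apply IH; auto). lra.
Qed.

Lemma sumR_const0 m : sumR m (fun _ => 0) = 0.
Proof. induction m; simpl; lra. Qed.

Lemma sumR_nonneg m F : (forall i, (i < m)%nat -> 0 <= F i) -> 0 <= sumR m F.
Proof. intros H. rewrite <- (sumR_const0 m). now apply sumR_le. Qed.

Lemma sumR_pos m F : (0 < m)%nat -> (forall i, (i < m)%nat -> 0 < F i) -> 0 < sumR m F.
Proof.
  destruct m as [|m]; intros Hm H; [lia|]. simpl.
  assert (0 <= sumR m F) by (apply sumR_nonneg; intros; left; auto).
  assert (0 < F m) by auto. lra.
Qed.

Lemma sumR_scal_l m c F : sumR m (fun i => c * F i) = c * sumR m F.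
Proof. induction m; simpl; [ring|]. rewrite IHm. ring. Qed.

Lemma sumR_minus m F G : sumR m (fun i => F i - G i) = sumR m F - sumR m G.
Proof. induction m; simpl; [ring|]. rewrite IHm. ring. Qed.

Lemma sumR_pick m F j : (j < m)%nat ->
  sumR m F = F j + sumR m (fun i => if Nat.eqb i j then 0 else F i).
Proof.
  induction m as [|m IH]; intros Hj; [lia|]. simpl.
  destruct (Nat.eqb_spec m j) as [->|Hne].
  - rewrite (sumR_ext j (fun i => if Nat.eqb i j then 0 else F i) F); [ring|].
    intros i Hi. destruct (Nat.eqb_spec i j); [lia|reflexivity].
  - rewrite IH by lia. ring.
Qed.

Lemma sumR_term_le m F j : (j < m)%nat -> (forall i, (i < m)%nat -> 0 <= F i) ->
  F j <= sumR m F.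
Proof.
  intros Hj H. rewrite (sumR_pick m F j Hj).
  assert (0 <= sumR m (fun i => if Nat.eqb i j then 0 else F i)); [|lra].
  apply sumR_nonneg. intros i Hi. destruct (Nat.eqb i j); [lra|auto].
Qed.

Lemma sumR_dominant m j (c a : nat -> R) mu : (j < m)%nat -> 0 <= mu -> c j = 1 ->
  (forall i, (i < m)%nat -> i <> j -> 0 <= c i <= mu) ->
  (forall i, (i < m)%nat -> 0 <= a i) ->
  exists p, sumR m (fun i => c i * a i) = a j + p /\ 0 <= p <= mu * sumR m a.
Proof.
  intros Hj Hmu Hcj Hc Ha.
  exists (sumR m (fun i => if Nat.eqb i j then 0 else c i * a i)).
  rewrite (sumR_pick _ _ j Hj), Hcj, Rmult_1_l. split; [reflexivity|split].
  - apply sumR_nonneg. intros i Hi.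
    destruct (Nat.eqb_spec i j); [lra|]. apply Rmult_le_pos; [apply Hc|apply Ha]; auto.
  - rewrite <- sumR_scal_l. apply sumR_le. intros i Hi.
    destruct (Nat.eqb_spec i j); [apply Rmult_le_pos; auto|].
    apply Rmult_le_compat_r; [apply Ha|apply Hc]; auto.
Qed.

(** * Polynomials with nonnegative coefficients *)

Lemma continuity_pt_poly m a x : continuity_pt (fun y => sumR m (fun i => a i * y ^ i)) x.
Proof.
  induction m as [|m IH]; simpl; [reg|].
  apply (continuity_pt_plus (fun y => sumR m (fun i => a i * y ^ i)) (fun y => a m * y ^ m));
    [exact IH|reg].
Qed.

Lemma poly_le m a x y : (forall i, (i < m)%nat -> 0 <= a i) -> 0 <= x <= y ->
  sumR m (fun i => a i * x ^ i) <= sumR m (fun i => a i * y ^ i).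
Proof.
  intros Ha Hxy. apply sumR_le. intros i Hi.
  apply Rmult_le_compat_l; [auto|]. now apply pow_incr.
Qed.

Lemma poly_le_top m a x : (forall i, (i < m)%nat -> 0 <= a i) -> 1 <= x ->
  x * sumR m (fun i => a i * x ^ i) <= x ^ m * sumR m a.
Proof.
  intros Ha Hx. rewrite <- !sumR_scal_l. apply sumR_le. intros i Hi.
  replace (x * (a i * x ^ i)) with (a i * x ^ S i) by (simpl; ring).
  rewrite (Rmult_comm (x ^ m)). apply Rmult_le_compat_l; [auto|]. apply Rle_pow; [auto|lia].
Qed.

(** * Properties holding for all small positive parameters *)

Definition near0 (P : R -> Prop) : Prop :=
  exists t0, 0 < t0 /\ forall t, 0 < t < t0 -> P t.

Lemma near0_mono (P Q : R -> Prop) : (forall t, 0 < t -> P t -> Q t) -> near0 P -> near0 Q.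
Proof. intros H [t0 [Ht0 HP]]. exists t0. split; [auto|]. intros t Ht. apply H, HP; tauto. Qed.

Lemma near0_and (P Q : R -> Prop) : near0 P -> near0 Q -> near0 (fun t => P t /\ Q t).
Proof.
  intros [a [Ha HP]] [b [Hb HQ]]. exists (Rmin a b). split; [now apply Rmin_pos|].
  intros t Ht. pose proof (Rmin_l a b). pose proof (Rmin_r a b).
  split; [apply HP|apply HQ]; lra.
Qed.

Lemma near0_forall N (G : nat -> Prop) (P : nat -> R -> Prop) :
  (forall i, G i -> (i <= N)%nat) -> (forall i, G i -> near0 (P i)) ->
  near0 (fun t => forall i, G i -> P i t).
Proof.
  intros HN HP.
  assert (Hone : forall i, near0 (fun t => G i -> P i t)).
  { intros i. destruct (classic (G i)) as [Gi|Gi].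
    - apply (near0_mono (P i)); auto.
    - exists 1. split; [lra|]. intros t _ Gi'. contradiction. }
  assert (Hk : forall k, near0 (fun t => forall i, (i <= k)%nat -> G i -> P i t)).
  { induction k as [|k IH].
    - eapply near0_mono; [|exact (Hone 0%nat)].
      intros t _ H i Hi. replace i with 0%nat by lia. exact H.
    - eapply near0_mono; [|exact (near0_and _ _ IH (Hone (S k)))].
      intros t _ [H H'] i Hi. destruct (Nat.eq_dec i (S k)) as [->|]; [auto|apply H; lia]. }
  exact (near0_mono _ _ (fun t _ H i Gi => H i (HN i Gi) Gi) (Hk N)).
Qed.

Lemma near0_witness P : near0 P -> exists t, 0 < t /\ P t.
Proof. intros [t0 [Ht0 HP]]. exists (t0 / 2). split; [lra|]. apply HP. lra. Qed.

Lemma near0_pos f : continuity_pt f 0 -> 0 < f 0 -> near0 (fun t => 0 < f t).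
Proof.
  intros Hc Hf. destruct (Hc (f 0 / 2)) as [alp [Halp H]]; [lra|].
  exists alp. split; [lra|]. intros t Ht.
  assert (Hd : R_dist (f t) (f 0) < f 0 / 2).
  { apply H. split; [split; [exact I|lra]|]. simpl. unfold R_dist.
    rewrite Rminus_0_r, Rabs_right; lra. }
  unfold R_dist in Hd. apply Rabs_def2 in Hd. lra.
Qed.

Lemma near0_Rpower_lt a m : 0 < a -> 0 < m -> near0 (fun t => Rpower t a < m).
Proof.
  intros Ha Hm. exists (Rpower m (/ a)). split; [apply exp_pos|]. intros t Ht.
  replace m with (Rpower (Rpower m (/ a)) a) at 1.
  - apply Rlt_Rpower_l; lra.
  - rewrite Rpower_mult, Rinv_l, Rpower_1; lra.
Qed.

Lemma near0_Rpower_lt_all (G : nat -> Prop) N (a : nat -> R) m : 0 < m ->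
  (forall i, G i -> (i <= N)%nat) -> (forall i, G i -> 0 < a i) ->
  near0 (fun t => forall i, G i -> Rpower t (a i) < m).
Proof.
  intros Hm HN Ha. apply (near0_forall N); [auto|]. intros i Gi. now apply near0_Rpower_lt; auto.
Qed.

Lemma Rpower_div t a b : Rpower t a / Rpower t b = Rpower t (a - b).
Proof. unfold Rminus. rewrite Rpower_plus, Rpower_Ropp. reflexivity. Qed.

Lemma Rpower_div_pow t a b i : Rpower t a / Rpower t b ^ i = Rpower t (a - INR i * b).
Proof.
  rewrite <- (Rpower_pow i (Rpower t b)) by apply exp_pos.
  rewrite Rpower_mult, Rpower_div, Rmult_comm. reflexivity.
Qed.

(** * Steady states *)

Section Network.
Variables (n : nat) (kon koff kcat lon loff lcat : nat -> R).
Hypotheses (Hn : (1 <= n)%nat) (Hkon : pos_rates n kon) (Hkoff : pos_rates n koff) (Hkcat : pos_rates n kcat)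
  (Hlon : pos_rates n lon) (Hloff : pos_rates n loff) (Hlcat : pos_rates n lcat).

Definition kE i := kon i / (koff i + kcat i).
Definition kF i := lon i / (loff i + lcat i).
Definition rcat i := kcat i / lcat i.

Fixpoint sratio (i : nat) : R :=
  match i with O => 1 | S j => sratio j * (rcat j * kE j / kF j) end.

Lemma kE_pos i : (i < n)%nat -> 0 < kE i.
Proof.
  intros Hi. specialize (Hkon i Hi). specialize (Hkoff i Hi). specialize (Hkcat i Hi).
  apply Rdiv_lt_0_compat; lra.
Qed.

Lemma kF_pos i : (i < n)%nat -> 0 < kF i.
Proof.
  intros Hi. specialize (Hlon i Hi). specialize (Hloff i Hi). specialize (Hlcat i Hi).
  apply Rdiv_lt_0_compat; lra.
Qed.

Lemma rcat_pos i : (i < n)%nat -> 0 < rcat i.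
Proof. intros Hi. apply Rdiv_lt_0_compat; auto. Qed.

Lemma sratio_pos i : (i <= n)%nat -> 0 < sratio i.
Proof.
  induction i as [|i IH]; intros Hi; simpl; [lra|].
  pose proof (rcat_pos i Hi). pose proof (kE_pos i Hi). pose proof (kF_pos i Hi).
  apply Rmult_lt_0_compat; [apply IH; lia|]. apply Rdiv_lt_0_compat; [nra|auto].
Qed.

Definition pE x := sumR n (fun i => kE i * sratio i * x ^ i).
Definition pF x := sumR n (fun i => rcat i * kE i * sratio i * x ^ i).
Definition pS x := sumR (S n) (fun i => sratio i * x ^ i).

Section Point.
Variables (x s0 e : R).
Hypothesis Hx : 0 < x.

(* The steady state with free kinase [e], free phosphatase [e / x] and free
   unphosphorylated substrate [s0]. *)
Definition ss_s i := s0 * sratio i * x ^ i.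
Definition ss_y i := kE i * ss_s i * e.
Definition ss_u i := kF i * ss_s (S i) * (e / x).

Lemma ss_u_eq i : (i < n)%nat -> ss_u i = rcat i * ss_y i.
Proof.
  intros Hi. pose proof (kF_pos i Hi).
  unfold ss_u, ss_y, ss_s. simpl. field. lra.
Qed.

Lemma dy_ss i : (i < n)%nat -> dy kon koff kcat ss_s ss_y e i = 0.
Proof.
  intros Hi. specialize (Hkoff i Hi). specialize (Hkcat i Hi).
  unfold dy, ss_y, kE. field. lra.
Qed.

Lemma du_ss i : (i < n)%nat -> du lon loff lcat ss_s ss_u (e / x) i = 0.
Proof.
  intros Hi. specialize (Hloff i Hi). specialize (Hlcat i Hi).
  unfold du, ss_u, kF. field. lra.
Qed.

Lemma flux_ss i : (i < n)%nat -> lcat i * ss_u i = kcat i * ss_y i.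
Proof.
  intros Hi. rewrite ss_u_eq by auto. specialize (Hlcat i Hi).
  unfold rcat. field. lra.
Qed.

Lemma ds_ss i : (i <= n)%nat -> ds n kon koff kcat lon loff lcat ss_s ss_y ss_u e (e / x) i = 0.
Proof.
  intros Hi.
  assert (Hbind : forall j, (j < n)%nat ->
    - kon j * ss_s j * e + koff j * ss_y j + lcat j * ss_u j = 0).
  { intros j Hj. pose proof (dy_ss j Hj). pose proof (flux_ss j Hj).
    unfold dy in *. rewrite Rmult_plus_distr_r in *. lra. }
  assert (Hunbind : forall j, (j < n)%nat ->
    kcat j * ss_y j - lon j * ss_s (S j) * (e / x) + loff j * ss_u j = 0).
  { intros j Hj. pose proof (du_ss j Hj). pose proof (flux_ss j Hj).
    unfold du in *. rewrite Rmult_plus_distr_r in *. lra. }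
  unfold ds. destruct i as [|j]; [apply Hbind; lia|].
  replace (S j - 1)%nat with j by lia. destruct (Nat.eqb_spec (S j) n) as [<-|].
  - replace (S j - 1)%nat with j by lia. apply Hunbind. lia.
  - simpl Nat.eqb. pose proof (Hunbind j ltac:(lia)). pose proof (Hbind (S j) ltac:(lia)). lra.
Qed.

Lemma sumR_ss_s : sumR (S n) ss_s = s0 * pS x.
Proof. unfold pS. rewrite <- sumR_scal_l. apply sumR_ext. intros. unfold ss_s. ring. Qed.

Lemma sumR_ss_y : sumR n ss_y = s0 * e * pE x.
Proof. unfold pE. rewrite <- sumR_scal_l. apply sumR_ext. intros. unfold ss_y, ss_s. ring. Qed.

Lemma sumR_ss_u : sumR n ss_u = s0 * e * pF x.
Proof.
  unfold pF. rewrite <- sumR_scal_l. apply sumR_ext. intros.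
  rewrite ss_u_eq by auto. unfold ss_y, ss_s. ring.
Qed.

Lemma ss_pos_steady_state Stot Etot Ftot : 0 < s0 -> 0 < e ->
  s0 * pS x + s0 * e * (pE x + pF x) = Stot -> e + s0 * e * pE x = Etot ->
  e / x + s0 * e * pF x = Ftot ->
  pos_steady_state n kon koff kcat lon loff lcat Stot Etot Ftot ss_s ss_y ss_u e (e / x).
Proof.
  intros Hs0 He HS HE HF.
  assert (Hs : forall i, (i <= n)%nat -> 0 < ss_s i).
  { intros i Hi. unfold ss_s. pose proof (sratio_pos i Hi). pose proof (pow_lt x i Hx).
    repeat apply Rmult_lt_0_compat; auto. }
  assert (Hf : 0 < e / x) by (apply Rdiv_lt_0_compat; auto).
  repeat split; auto.
  - pose proof (kE_pos i H). pose proof (Hs i ltac:(lia)).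
    apply Rmult_lt_0_compat; [apply Rmult_lt_0_compat|]; auto.
  - pose proof (kF_pos i H). pose proof (Hs (S i) ltac:(lia)).
    apply Rmult_lt_0_compat; [apply Rmult_lt_0_compat|]; auto.
  - intros. now apply ds_ss.
  - now apply dy_ss.
  - now apply du_ss.
  - rewrite (sumR_ext n _ (fun _ => 0)); [rewrite sumR_const0; ring|]. intros; now apply dy_ss.
  - rewrite (sumR_ext n _ (fun _ => 0)); [rewrite sumR_const0; ring|]. intros; now apply du_ss.
  - rewrite sumR_ss_s, sumR_ss_y, sumR_ss_u. lra.
  - now rewrite sumR_ss_y.
  - now rewrite sumR_ss_u.
Qed.

End Point.

Variables (Stot Etot Ftot : R).
Hypotheses (HS : 0 < Stot) (HE : 0 < Etot) (HF : 0 < Ftot).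

(* Solving the kinase and phosphatase conservation laws at [ss_* x s0 e] for
   [s0 * e] and [e] gives [zeta x] and [efree x]; [resid x] is then the
   substrate conservation law multiplied by [e].  The positive part makes
   [e > 0] at every root of [resid]. *)
Definition zeta x := (x * Ftot - Etot) / (x * pF x - pE x).
Definition efree x := Etot - zeta x * pE x.
Definition pos_part a := (a + Rabs a) / 2.
Definition resid x := zeta x * pS x + pos_part (efree x) * (zeta x * (pE x + pF x) - Stot).

Definition xmin := 1 + Etot / Ftot + sumR n (fun i => / rcat i).

Lemma pos_part_pos a : 0 < a -> pos_part a = a.
Proof. intros. unfold pos_part. rewrite Rabs_right; lra. Qed.

Lemma pos_part_nonpos a : a <= 0 -> pos_part a = 0.
Proof. intros. unfold pos_part. rewrite Rabs_left1; lra. Qed.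

Lemma pE_pos x : 0 < x -> 0 < pE x.
Proof.
  intros Hx. apply sumR_pos; [lia|]. intros i Hi.
  pose proof (kE_pos i Hi). pose proof (sratio_pos i ltac:(lia)). pose proof (pow_lt x i Hx).
  apply Rmult_lt_0_compat; [apply Rmult_lt_0_compat|]; auto.
Qed.

Lemma pF_pos x : 0 < x -> 0 < pF x.
Proof.
  intros Hx. apply sumR_pos; [lia|]. intros i Hi.
  pose proof (rcat_pos i Hi). pose proof (kE_pos i Hi).
  pose proof (sratio_pos i ltac:(lia)). pose proof (pow_lt x i Hx).
  apply Rmult_lt_0_compat; [apply Rmult_lt_0_compat; [apply Rmult_lt_0_compat|]|]; auto.
Qed.

Lemma pS_pos x : 0 < x -> 0 < pS x.
Proof.
  intros Hx. apply sumR_pos; [lia|]. intros i Hi.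
  pose proof (sratio_pos i ltac:(lia)). pose proof (pow_lt x i Hx).
  apply Rmult_lt_0_compat; auto.
Qed.

Lemma xmin_spec x : xmin <= x ->
  1 <= x /\ Etot < x * Ftot /\ forall i, (i < n)%nat -> 1 < rcat i * x.
Proof.
  intros Hx.
  assert (Hinv : forall i, (i < n)%nat -> / rcat i <= sumR n (fun i => / rcat i)).
  { intros i Hi. apply (sumR_term_le n (fun i => / rcat i)); [auto|].
    intros j Hj. left. apply Rinv_0_lt_compat, rcat_pos; auto. }
  assert (Hsum : 0 <= sumR n (fun i => / rcat i)).
  { apply sumR_nonneg. intros j Hj. left. apply Rinv_0_lt_compat, rcat_pos; auto. }
  assert (HEF : Etot / Ftot * Ftot = Etot) by (field; lra).
  unfold xmin in Hx. split; [|split].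
  - assert (0 < Etot / Ftot) by (apply Rdiv_lt_0_compat; auto). lra.
  - assert (Etot / Ftot < x) by (assert (0 < 1) by lra; lra). nra.
  - intros i Hi. pose proof (rcat_pos i Hi). pose proof (Hinv i Hi).
    assert (/ rcat i < x) by (assert (0 < Etot / Ftot) by (apply Rdiv_lt_0_compat; auto); lra).
    replace 1 with (rcat i * / rcat i) by (field; lra). now apply Rmult_lt_compat_l.
Qed.

Lemma den_pos x : xmin <= x -> 0 < x * pF x - pE x.
Proof.
  intros Hx. destruct (xmin_spec x Hx) as [Hx1 [_ Hr]].
  unfold pF, pE. rewrite <- sumR_scal_l, <- sumR_minus.
  apply sumR_pos; [lia|]. intros i Hi.
  pose proof (Hr i Hi). pose proof (kE_pos i Hi).
  pose proof (sratio_pos i ltac:(lia)). pose proof (pow_lt x i ltac:(lra)).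
  replace (x * (rcat i * kE i * sratio i * x ^ i) - kE i * sratio i * x ^ i)
    with (kE i * sratio i * x ^ i * (rcat i * x - 1)) by ring.
  apply Rmult_lt_0_compat; [apply Rmult_lt_0_compat; [apply Rmult_lt_0_compat|]|]; lra.
Qed.

Lemma zeta_pos x : xmin <= x -> 0 < zeta x.
Proof.
  intros Hx. destruct (xmin_spec x Hx) as [_ [HEx _]].
  apply Rdiv_lt_0_compat; [lra|]. now apply den_pos.
Qed.

Lemma efree_pos_of_root x : xmin <= x -> resid x = 0 -> 0 < efree x.
Proof.
  intros Hx Hr. destruct (Rlt_or_le 0 (efree x)) as [He|He]; [auto|].
  unfold resid in Hr. rewrite pos_part_nonpos in Hr by auto.
  pose proof (xmin_spec x Hx) as [Hx1 _].
  pose proof (zeta_pos x Hx). pose proof (pS_pos x ltac:(lra)). nra.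
Qed.

Lemma resid_div_efree x : 0 < efree x ->
  resid x / efree x = zeta x * pS x / efree x + zeta x * (pE x + pF x) - Stot.
Proof. intros He. unfold resid. rewrite pos_part_pos by auto. field. lra. Qed.

Lemma steady_state_of_root x : xmin <= x -> resid x = 0 ->
  pos_steady_state n kon koff kcat lon loff lcat Stot Etot Ftot
    (ss_s x (zeta x / efree x)) (ss_y x (zeta x / efree x) (efree x))
    (ss_u x (zeta x / efree x) (efree x)) (efree x) (efree x / x).
Proof.
  intros Hx Hr.
  pose proof (xmin_spec x Hx) as [Hx1 _]. pose proof (den_pos x Hx).
  pose proof (zeta_pos x Hx). pose proof (efree_pos_of_root x Hx Hr) as He.
  apply ss_pos_steady_state; [lra|apply Rdiv_lt_0_compat; auto|auto|..].
  - pose proof (resid_div_efree x He) as Hb. rewrite Hr, Rdiv_0_l in Hb.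
    replace (zeta x / efree x * efree x) with (zeta x) by (field; lra). lra.
  - replace (zeta x / efree x * efree x) with (zeta x) by (field; lra). unfold efree. ring.
  - replace (zeta x / efree x * efree x) with (zeta x) by (field; lra).
    unfold efree, zeta. field. lra.
Qed.

Lemma resid_continuous x : xmin <= x -> continuity_pt resid x.
Proof.
  intros Hx. pose proof (den_pos x Hx).
  unfold resid, efree, zeta, pos_part. reg; try lra; unfold pE, pF, pS; apply continuity_pt_poly.
Qed.

Lemma resid_pos_large X : xmin <= X ->
  Etot * Stot * pF 1 < (X * Ftot - Etot) * sratio n -> 0 < resid X.
Proof.
  intros HX Hbig. destruct (xmin_spec X HX) as [HX1 [HEX _]].
  pose proof (den_pos X HX) as HD. pose proof (zeta_pos X HX) as Hz.
  pose proof (sratio_pos n (le_n n)) as Hsn. pose proof (pow_lt X n ltac:(lra)) as HXn.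
  assert (HSn : sratio n * X ^ n <= pS X).
  { apply (sumR_term_le (S n) (fun i => sratio i * X ^ i) n); [lia|].
    intros i Hi. pose proof (sratio_pos i ltac:(lia)). pose proof (pow_lt X i ltac:(lra)). nra. }
  assert (HQ : X * pF X <= X ^ n * pF 1).
  { replace (pF 1) with (sumR n (fun i => rcat i * kE i * sratio i)).
    - apply poly_le_top; [|auto]. intros i Hi. pose proof (rcat_pos i Hi).
      pose proof (kE_pos i Hi). pose proof (sratio_pos i ltac:(lia)).
      left. apply Rmult_lt_0_compat; [apply Rmult_lt_0_compat|]; auto.
    - apply sumR_ext. intros. rewrite pow1. ring. }
  assert (Hmain : Etot * Stot < zeta X * pS X).
  { apply Rlt_le_trans with (zeta X * (sratio n * X ^ n)); [|nra].
    unfold zeta. apply (Rmult_lt_reg_l (X * pF X - pE X)); [auto|].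
    replace ((X * pF X - pE X) * ((X * Ftot - Etot) / (X * pF X - pE X) * (sratio n * X ^ n)))
      with (X ^ n * ((X * Ftot - Etot) * sratio n)) by (field; lra).
    pose proof (pE_pos X ltac:(lra)). pose proof (Rmult_lt_0_compat _ _ HE HS). nra. }
  assert (Hrest : - (Etot * Stot) <= pos_part (efree X) * (zeta X * (pE X + pF X) - Stot)).
  { pose proof (pE_pos X ltac:(lra)). pose proof (pF_pos X ltac:(lra)).
    destruct (Rlt_or_le 0 (efree X)) as [He|He].
    - rewrite pos_part_pos by auto.
      assert (efree X <= Etot) by (unfold efree; nra).
      assert (0 <= zeta X * (pE X + pF X)) by nra.
      assert (efree X * Stot <= Etot * Stot) by nra. nra.
    - rewrite pos_part_nonpos by auto. nra. }
  unfold resid. lra.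
Qed.

Lemma resid_pos_beyond y : exists X, y < X /\ xmin <= X /\ 0 < resid X.
Proof.
  pose proof (sratio_pos n (le_n n)) as Hsn. pose proof (pF_pos 1 ltac:(lra)).
  set (c := Etot * Stot * pF 1 / sratio n).
  assert (Hc : 0 < c) by (apply Rdiv_lt_0_compat; auto; repeat apply Rmult_lt_0_compat; auto).
  assert (Hx1 : 1 <= xmin) by (destruct (xmin_spec xmin (Rle_refl _)); auto).
  exists (xmin + Rabs y + c / Ftot).
  pose proof (Rle_abs y). pose proof (Rabs_pos y).
  assert (0 < c / Ftot) by (apply Rdiv_lt_0_compat; auto).
  split; [lra|split; [lra|]]. apply resid_pos_large; [lra|].
  destruct (xmin_spec xmin (Rle_refl _)) as [_ [HEx _]].
  replace (Etot * Stot * pF 1) with (c * sratio n) by (unfold c; field; lra).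
  apply Rmult_lt_compat_r; [auto|].
  replace ((xmin + Rabs y + c / Ftot) * Ftot) with (xmin * Ftot + Rabs y * Ftot + c)
    by (field; lra).
  pose proof (Rmult_le_pos _ _ (Rabs_pos y) (Rlt_le _ _ HF)). nra.
Qed.

Lemma multistationary_of_sign_change xl xw : xmin <= xl -> xl < xw ->
  0 < resid xl -> resid xw < 0 ->
  multistationary n kon koff kcat lon loff lcat Stot Etot Ftot.
Proof.
  intros Hxl Hlw Hl Hw.
  destruct (resid_pos_beyond xw) as [X [HwX [_ HX]]].
  assert (Hcont : forall a, xl <= a -> continuity_pt resid a)
    by (intros; apply resid_continuous; lra).
  destruct (IVT_interv (fun x => - resid x) xl xw) as [r1 [Hr1 E1]]; try lra.
  { intros a Ha. apply continuity_pt_opp, Hcont. lra. }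
  destruct (IVT_interv resid xw X) as [r2 [Hr2 E2]]; auto.
  { intros a Ha. apply Hcont. lra. }
  assert (Hr1w : r1 < xw) by (destruct (Req_dec r1 xw); [subst; lra|lra]).
  assert (Hr2w : xw < r2) by (destruct (Req_dec r2 xw); [subst; lra|lra]).
  assert (E1' : resid r1 = 0) by lra.
  pose proof (efree_pos_of_root r1 ltac:(lra) E1').
  pose proof (efree_pos_of_root r2 ltac:(lra) E2).
  do 10 eexists. split; [apply (steady_state_of_root r1); [lra|auto]|].
  split; [apply (steady_state_of_root r2); [lra|auto]|].
  right; right. destruct (Req_dec (efree r1) (efree r2)) as [Ee|]; [right|left; auto].
  rewrite Ee. intros Ef. apply Rmult_eq_reg_l in Ef; [|lra].
  apply Rinv_eq_reg in Ef. lra.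
Qed.
End Network.

(** * Perturbation estimates *)

Lemma Rdiv_le_compat a a' b b' : 0 <= a <= a' -> 0 < b' <= b -> a / b <= a' / b'.
Proof.
  intros Ha Hb. unfold Rdiv. apply Rmult_le_compat; try lra.
  - left. apply Rinv_0_lt_compat. lra.
  - apply Rinv_le_contravar; lra.
Qed.

Lemma Rlt_div_swap a b c : 0 < a -> 0 < c -> a < b / c -> c < b / a.
Proof.
  intros Ha Hc H. apply (Rmult_lt_compat_r c) in H; [|auto].
  replace (b / c * c) with b in H by (field; lra).
  apply (Rmult_lt_reg_r a); [auto|]. replace (b / a * a) with b by (field; lra). lra.
Qed.

Section Perturbation.
Variables (Ftot Etot Stot c r w : R).
Hypotheses (HF : 0 < Ftot) (HE : 0 < Etot) (Hc : 0 < c) (Hr : 0 < r) (Hw : 0 < w).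

(* Bounds, uniform in perturbations of size at most [eta], on [zeta], [efree]
   and [resid / efree] at [x = w / d] when [pE x = c w + p], [pF x = r c w + q]
   and [pS x = 1 + s]. *)
Definition z_lo eta := (Ftot - Etot * eta / w) / (r * c * w + eta).
Definition z_hi eta := Ftot / (r * c * w - (c * w + eta) * eta / w).
Definition e_lo eta := Etot - z_hi eta * (c * w + eta).
Definition e_hi eta := Etot - z_lo eta * (c * w).
Definition bal_lo eta := z_lo eta / e_hi eta + z_lo eta * ((1 + r) * c * w) - Stot.
Definition bal_hi eta :=
  z_hi eta * (1 + eta) / e_lo eta + z_hi eta * ((1 + r) * c * w + eta) - Stot.
Definition admissible eta :=
  0 < Ftot - Etot * eta / w /\ 0 < r * c * w - (c * w + eta) * eta / w /\ 0 < e_lo eta.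

Lemma z_bounds eta d p q : admissible eta -> 0 < d <= eta ->
  0 <= p -> 0 <= q -> p + q <= eta ->
  z_lo eta <= (w / d * Ftot - Etot) / (w / d * (r * c * w + q) - (c * w + p)) <= z_hi eta.
Proof.
  intros [HN [HD _]] Hd Hp Hq Hpq.
  assert (Hcw : 0 < c * w) by (apply Rmult_lt_0_compat; auto).
  assert (Hrcw : 0 < r * c * w) by (repeat apply Rmult_lt_0_compat; auto).
  assert (HEd : 0 <= Etot * d / w <= Etot * eta / w).
  { unfold Rdiv. split; [apply Rmult_le_pos; [nra|left; apply Rinv_0_lt_compat; auto]|].
    apply Rmult_le_compat_r; [left; apply Rinv_0_lt_compat; auto|nra]. }
  assert (HPd : 0 <= (c * w + p) * d / w <= (c * w + eta) * eta / w).
  { unfold Rdiv. split; [apply Rmult_le_pos; [nra|left; apply Rinv_0_lt_compat; auto]|].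
    apply Rmult_le_compat_r; [left; apply Rinv_0_lt_compat; auto|].
    apply Rmult_le_compat; lra. }
  assert (Hden : w / d * (r * c * w + q) - (c * w + p)
                 = w / d * ((r * c * w + q) - (c * w + p) * d / w)) by (field; lra).
  assert (0 < w / d) by (apply Rdiv_lt_0_compat; lra).
  replace ((w / d * Ftot - Etot) / (w / d * (r * c * w + q) - (c * w + p)))
    with ((Ftot - Etot * d / w) / ((r * c * w + q) - (c * w + p) * d / w)).
  2:{ assert (0 < (r * c * w + q) * w - (c * w + p) * d).
      { replace ((r * c * w + q) * w - (c * w + p) * d)
          with (w * ((r * c * w + q) - (c * w + p) * d / w)) by (field; lra).
        apply Rmult_lt_0_compat; lra. }
      rewrite Hden. field. lra. }
  split; apply Rdiv_le_compat; lra.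
Qed.

Lemma balance_bounds eta d p q s : admissible eta -> 0 < d <= eta ->
  0 <= p -> 0 <= q -> p + q <= eta -> 0 <= s <= eta ->
  let z := (w / d * Ftot - Etot) / (w / d * (r * c * w + q) - (c * w + p)) in
  let e := Etot - z * (c * w + p) in
  0 < e /\ bal_lo eta <= z * (1 + s) / e + z * ((c * w + p) + (r * c * w + q)) - Stot
    <= bal_hi eta.
Proof.
  intros Hadm Hd Hp Hq Hpq Hs z e.
  pose proof (z_bounds eta d p q Hadm Hd Hp Hq Hpq) as [Hzl Hzh]. fold z in Hzl, Hzh.
  destruct Hadm as [HN [HD Hel]].
  assert (Hcw : 0 < c * w) by (apply Rmult_lt_0_compat; auto).
  assert (Hrcw : 0 < r * c * w) by (repeat apply Rmult_lt_0_compat; auto).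
  assert (Hzl0 : 0 < z_lo eta) by (apply Rdiv_lt_0_compat; lra).
  assert (Hel_e : e_lo eta <= e).
  { unfold e_lo, e. assert (z * (c * w + p) <= z_hi eta * (c * w + eta))
      by (apply Rmult_le_compat; lra). lra. }
  assert (He_eh : e <= e_hi eta).
  { unfold e_hi, e. assert (z_lo eta * (c * w) <= z * (c * w + p))
      by (apply Rmult_le_compat; lra). lra. }
  split; [lra|split].
  - unfold bal_lo.
    assert (z_lo eta / e_hi eta <= z * (1 + s) / e).
    { apply Rdiv_le_compat; [|lra]. split; [lra|]. nra. }
    assert (z_lo eta * ((1 + r) * c * w) <= z * (c * w + p + (r * c * w + q)))
      by (apply Rmult_le_compat; lra).
    lra.
  - unfold bal_hi.
    assert (z * (1 + s) / e <= z_hi eta * (1 + eta) / e_lo eta).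
    { apply Rdiv_le_compat; [|lra]. split; [nra|]. apply Rmult_le_compat; lra. }
    assert (z * (c * w + p + (r * c * w + q)) <= z_hi eta * ((1 + r) * c * w + eta))
      by (apply Rmult_le_compat; lra).
    lra.
Qed.

Definition e_inf := Etot - Ftot / r.
Definition bal0 := Ftot / (r * c * w * e_inf) + Ftot / r + Ftot - Stot.

Hypothesis He_inf : 0 < e_inf.

Lemma e_inf_mult_pos : 0 < Etot * r - Ftot.
Proof.
  replace (Etot * r - Ftot) with (r * e_inf) by (unfold e_inf; field; lra).
  now apply Rmult_lt_0_compat.
Qed.

Lemma bal_lo_0 : bal_lo 0 = bal0.
Proof.
  pose proof e_inf_mult_pos. unfold bal_lo, bal0, e_hi, z_lo, e_inf.
  field. repeat split; lra.
Qed.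

Lemma bal_hi_0 : bal_hi 0 = bal0.
Proof.
  pose proof e_inf_mult_pos. unfold bal_hi, bal0, e_lo, z_hi, e_inf.
  replace (r * c * w - (c * w + 0) * 0 / w) with (r * c * w) by (field; lra).
  field. repeat split; lra.
Qed.

Lemma rcw_pos : 0 < r * c * w.
Proof. repeat apply Rmult_lt_0_compat; auto. Qed.

(* The side conditions left by [reg] are denominators at [eta = 0]; each of them
   is [r c w] or [e_inf]. *)
Ltac nonzero_at_0 :=
  pose proof rcw_pos;
  match goal with |- ?a <> 0 =>
    first [ replace a with (r * c * w) by (field; lra)
          | replace a with e_inf by (unfold e_inf; field; lra) ] end;
  lra.

Lemma near0_admissible : near0 admissible.
Proof.
  pose proof rcw_pos. apply near0_and; [|apply near0_and].
  - apply (near0_pos (fun eta => Ftot - Etot * eta / w)); [reg; lra|].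
    replace (Ftot - Etot * 0 / w) with Ftot by (field; lra). auto.
  - apply (near0_pos (fun eta => r * c * w - (c * w + eta) * eta / w)); [reg; lra|].
    replace (r * c * w - (c * w + 0) * 0 / w) with (r * c * w) by (field; lra). auto.
  - apply near0_pos; [unfold e_lo, z_hi; reg; nonzero_at_0|].
    replace (e_lo 0) with e_inf by (unfold e_lo, z_hi, e_inf; field; lra). auto.
Qed.

Lemma near0_bal_lo : 0 < bal0 -> near0 (fun eta => 0 < bal_lo eta).
Proof.
  intros H. apply near0_pos; [|now rewrite bal_lo_0].
  unfold bal_lo, e_hi, z_lo. reg; nonzero_at_0.
Qed.

Lemma near0_bal_hi : bal0 < 0 -> near0 (fun eta => bal_hi eta < 0).
Proof.
  intros H. apply (near0_mono (fun eta => 0 < - bal_hi eta)); [intros; lra|].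
  apply near0_pos; [|rewrite bal_hi_0; lra].
  unfold bal_hi, e_lo, z_hi. reg; nonzero_at_0.
Qed.
End Perturbation.

Section Choice.
Variables (Ftot Etot Stot c r : R).
Hypotheses (HF : 0 < Ftot) (HE : 0 < Etot) (Hc : 0 < c) (HSF : Ftot < Stot)
  (HrE : Ftot / Etot < r) (HrS : Ftot / (Stot - Ftot) < r).

Definition gap := Stot - Ftot - Ftot / r.
Definition slope := Ftot / (r * c * e_inf Ftot Etot r).
Definition w_lo := slope / (2 * gap).
Definition w_hi := 2 * slope / gap.

Lemma r_pos : 0 < r.
Proof. pose proof (Rdiv_lt_0_compat _ _ HF HE). lra. Qed.

Lemma e_inf_pos : 0 < e_inf Ftot Etot r.
Proof.
  pose proof r_pos. unfold e_inf.
  apply (Rmult_lt_compat_r Etot) in HrE; [|auto].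
  replace (Ftot / Etot * Etot) with Ftot in HrE by (field; lra).
  apply (Rmult_lt_reg_r r); [auto|]. replace ((Etot - Ftot / r) * r) with (Etot * r - Ftot)
    by (field; lra). lra.
Qed.

Lemma gap_pos : 0 < gap.
Proof.
  pose proof r_pos. unfold gap.
  apply (Rmult_lt_compat_r (Stot - Ftot)) in HrS; [|lra].
  replace (Ftot / (Stot - Ftot) * (Stot - Ftot)) with Ftot in HrS by (field; lra).
  apply (Rmult_lt_reg_r r); [auto|]. replace ((Stot - Ftot - Ftot / r) * r)
    with ((Stot - Ftot) * r - Ftot) by (field; lra). lra.
Qed.

Lemma slope_pos : 0 < slope.
Proof.
  pose proof r_pos. pose proof e_inf_pos.
  apply Rdiv_lt_0_compat; [auto|]. repeat apply Rmult_lt_0_compat; auto.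
Qed.

Lemma bal0_eq w : 0 < w -> bal0 Ftot Etot Stot c r w = slope / w - gap.
Proof.
  intros Hw. pose proof r_pos. pose proof e_inf_pos.
  unfold bal0, slope, gap. field. repeat split; lra.
Qed.

Lemma w_lo_pos : 0 < w_lo.
Proof. pose proof slope_pos. pose proof gap_pos. apply Rdiv_lt_0_compat; lra. Qed.

Lemma w_lo_lt_w_hi : w_lo < w_hi.
Proof.
  pose proof slope_pos. pose proof gap_pos. unfold w_lo, w_hi.
  assert (0 < slope / gap) by (apply Rdiv_lt_0_compat; auto).
  replace (slope / (2 * gap)) with (slope / gap / 2) by (field; lra).
  replace (2 * slope / gap) with (2 * (slope / gap)) by (field; lra). lra.
Qed.

Lemma exists_eta : exists eta, 0 < eta /\
  admissible Ftot Etot c r w_lo eta /\ admissible Ftot Etot c r w_hi eta /\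
  0 < bal_lo Ftot Etot Stot c r w_lo eta /\ bal_hi Ftot Etot Stot c r w_hi eta < 0.
Proof.
  pose proof r_pos. pose proof e_inf_pos. pose proof slope_pos. pose proof gap_pos.
  pose proof w_lo_pos. pose proof w_lo_lt_w_hi.
  assert (Hlo : 0 < bal0 Ftot Etot Stot c r w_lo).
  { rewrite bal0_eq by auto. unfold w_lo. replace (slope / (slope / (2 * gap)) - gap) with gap
      by (field; lra). auto. }
  assert (Hhi : bal0 Ftot Etot Stot c r w_hi < 0).
  { rewrite bal0_eq by lra. unfold w_hi. replace (slope / (2 * slope / gap) - gap) with (- gap / 2)
      by (field; lra). lra. }
  assert (A1 : near0 (admissible Ftot Etot c r w_lo)) by (apply near0_admissible; auto).
  assert (A2 : near0 (admissible Ftot Etot c r w_hi)) by (apply near0_admissible; auto; lra).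
  assert (B1 : near0 (fun eta => 0 < bal_lo Ftot Etot Stot c r w_lo eta))
    by (apply near0_bal_lo; auto).
  assert (B2 : near0 (fun eta => bal_hi Ftot Etot Stot c r w_hi eta < 0))
    by (apply near0_bal_hi; auto; lra).
  destruct (near0_witness _ (near0_and _ _ (near0_and _ _ A1 A2) (near0_and _ _ B1 B2)))
    as [eta [Heta [[? ?] [? ?]]]].
  exists eta. auto.
Qed.
End Choice.

(** * Rescaling of the binding rates *)

Section Rescaling.
Variables (n : nat) (kon koff kcat lon loff lcat : nat -> R) (Stot Etot Ftot : R).
Hypotheses (Hn : (2 <= n)%nat)
  (Hkon : pos_rates n kon) (Hkoff : pos_rates n koff) (Hkcat : pos_rates n kcat)
  (Hlon : pos_rates n lon) (Hloff : pos_rates n loff) (Hlcat : pos_rates n lcat)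
  (HS : 0 < Stot) (HE : 0 < Etot) (HF : 0 < Ftot) (HSF : Ftot < Stot).

Local Notation kE0 := (kE kon koff kcat).
Local Notation sr0 := (sratio kon koff kcat lon loff lcat).
Local Notation pE0 := (pE n kon koff kcat lon loff lcat).
Local Notation pF0 := (pF n kon koff kcat lon loff lcat).
Local Notation pS0 := (pS n kon koff kcat lon loff lcat).

Let c1 := kE0 1 * sr0 1.
Let r1 := rcat kcat lcat 1.
Hypotheses (HrE : Ftot / Etot < r1) (HrS : Ftot / (Stot - Ftot) < r1).

Let wl := w_lo Ftot Etot Stot c1 r1.
Let wh := w_hi Ftot Etot Stot c1 r1.

Lemma kE_sratio_pos i : (i < n)%nat -> 0 < kE0 i * sr0 i.
Proof.
  intros Hi. apply Rmult_lt_0_compat; [apply (kE_pos n); auto|].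
  apply (sratio_pos n); auto; lia.
Qed.

Lemma c1_pos : 0 < c1.
Proof. apply kE_sratio_pos. lia. Qed.

Lemma r1_pos : 0 < r1.
Proof. apply (rcat_pos n); auto; lia. Qed.

Lemma wl_pos : 0 < wl.
Proof. apply w_lo_pos; auto. apply c1_pos. Qed.

Lemma wl_lt_wh : wl < wh.
Proof. apply w_lo_lt_w_hi; auto. apply c1_pos. Qed.

Lemma polys_le w : 0 < w <= wh ->
  0 < pE0 w <= pE0 wh /\ 0 < pF0 w <= pF0 wh /\ 0 < pS0 w <= pS0 wh.
Proof.
  intros Hw. repeat split.
  - apply (pE_pos n); auto; try lia; lra.
  - apply poly_le; [|lra]. intros i Hi. left. now apply kE_sratio_pos.
  - apply (pF_pos n); auto; try lia; lra.
  - apply poly_le; [|lra]. intros i Hi. pose proof (kE_sratio_pos i Hi).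
    pose proof (rcat_pos n kcat lcat Hkcat Hlcat i Hi). rewrite Rmult_assoc. nra.
  - apply (pS_pos n); auto; try lia; lra.
  - apply poly_le; [|lra]. intros i Hi. left. apply (sratio_pos n); auto; lia.
Qed.

Variable eta : R.
Hypotheses (Heta : 0 < eta)
  (Hadm_l : admissible Ftot Etot c1 r1 wl eta) (Hadm_h : admissible Ftot Etot c1 r1 wh eta)
  (Hbal_l : 0 < bal_lo Ftot Etot Stot c1 r1 wl eta)
  (Hbal_h : bal_hi Ftot Etot Stot c1 r1 wh eta < 0).

Definition coef_bound := eta / (1 + pE0 wh + pF0 wh + pS0 wh).
Definition scale_bound := Rmin eta (wl / xmin n kcat lcat Etot Ftot).

Lemma coef_bound_spec : 0 < coef_bound /\
  coef_bound * (pE0 wh + pF0 wh) <= eta /\ coef_bound * pS0 wh <= eta.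
Proof.
  pose proof wl_pos. pose proof wl_lt_wh.
  destruct (polys_le wh ltac:(lra)) as [[HE0 _] [[HF0 _] [HS0 _]]].
  assert (Hsum : coef_bound * (1 + pE0 wh + pF0 wh + pS0 wh) = eta)
    by (unfold coef_bound; field; lra).
  assert (0 < coef_bound) by (apply Rdiv_lt_0_compat; lra).
  split; [auto|split]; nra.
Qed.

Lemma scale_bound_pos : 0 < scale_bound.
Proof.
  pose proof wl_pos.
  destruct (xmin_spec n kcat lcat Hkcat Hlcat Etot Ftot HE HF _ (Rle_refl _)) as [Hx1 _].
  apply Rmin_pos; [auto|]. apply Rdiv_lt_0_compat; lra.
Qed.

Variable g : nat -> R.
Let delta := g (n + 2)%nat.
(* With [gam 0 = 1], the rescaled [kon i] below is [gam (n + 1 + i) / gam i * kon i]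
   for every [i], including [i = 0]. *)
Let gam i := if Nat.eqb i 0 then 1 else g i.
Hypotheses (Hg : forall i, (1 <= i <= 2 * n)%nat -> 0 < g i)
  (Hdelta : delta < scale_bound)
  (Hcoef_E : forall i, (i < n)%nat -> i <> 1%nat -> g (n + 1 + i)%nat / delta ^ i < coef_bound)
  (Hcoef_S : forall i, (1 <= i <= n)%nat -> g i / delta ^ i < coef_bound).

Definition konS i := (if Nat.eqb i 0 then g (n + 1)%nat else g (n + 1 + i)%nat / g i) * kon i.
Definition lonS i := g (n + 1 + i)%nat / g (i + 1)%nat * lon i.

Local Notation kES := (kE konS koff kcat).
Local Notation srS := (sratio konS koff kcat lonS loff lcat).
Local Notation pES := (pE n konS koff kcat lonS loff lcat).
Local Notation pFS := (pF n konS koff kcat lonS loff lcat).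
Local Notation pSS := (pS n konS koff kcat lonS loff lcat).
Local Notation zetaS := (zeta n konS koff kcat lonS loff lcat Etot Ftot).
Local Notation efreeS := (efree n konS koff kcat lonS loff lcat Etot Ftot).
Local Notation residS := (resid n konS koff kcat lonS loff lcat Stot Etot Ftot).

Lemma gam_pos i : (i <= 2 * n)%nat -> 0 < gam i.
Proof. intros Hi. unfold gam. destruct (Nat.eqb_spec i 0); [lra|apply Hg; lia]. Qed.

Lemma delta_pos : 0 < delta.
Proof. apply Hg. lia. Qed.

Lemma konS_pos : pos_rates n konS.
Proof.
  intros i Hi. unfold konS. apply Rmult_lt_0_compat; [|auto].
  destruct (Nat.eqb_spec i 0); [apply Hg; lia|apply Rdiv_lt_0_compat; apply Hg; lia].
Qed.

Lemma lonS_pos : pos_rates n lonS.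
Proof.
  intros i Hi. apply Rmult_lt_0_compat; [|auto]. apply Rdiv_lt_0_compat; apply Hg; lia.
Qed.

Lemma kE_rescaled i : (i < n)%nat -> kES i = g (n + 1 + i)%nat / gam i * kE0 i.
Proof.
  intros Hi. unfold kE, konS, gam. destruct (Nat.eqb_spec i 0) as [->|].
  - rewrite Nat.add_0_r. field. pose proof (Hkoff 0%nat Hi). pose proof (Hkcat 0%nat Hi). lra.
  - unfold Rdiv. ring.
Qed.

Lemma kF_rescaled i :
  kF lonS loff lcat i = g (n + 1 + i)%nat / gam (S i) * kF lon loff lcat i.
Proof.
  unfold kF, lonS, gam. simpl Nat.eqb. replace (i + 1)%nat with (S i) by lia.
  unfold Rdiv. ring.
Qed.

Lemma sratio_rescaled i : (i <= n)%nat -> srS i = gam i * sr0 i.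
Proof.
  induction i as [|i IH]; intros Hi; simpl; [unfold gam; simpl; ring|].
  rewrite IH, kE_rescaled, kF_rescaled by lia.
  pose proof (gam_pos i ltac:(lia)). pose proof (gam_pos (S i) ltac:(lia)).
  pose proof (Hg (n + 1 + i)%nat ltac:(lia)).
  pose proof (kF_pos n lon loff lcat Hlon Hloff Hlcat i ltac:(lia)).
  pose proof (Hlcat i ltac:(lia)). unfold rcat. field. repeat split; lra.
Qed.

Definition coefE i := g (n + 1 + i)%nat / delta ^ i.
Definition coefS i := gam i / delta ^ i.

Lemma coefE_1 : coefE 1 = 1.
Proof.
  unfold coefE. replace (n + 1 + 1)%nat with (n + 2)%nat by lia. rewrite pow_1.
  apply Rinv_r. pose proof delta_pos. lra.
Qed.

Lemma coefE_bounds i : (i < n)%nat -> i <> 1%nat -> 0 <= coefE i <= coef_bound.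
Proof.
  intros Hi Hi1. split; [|left; now apply Hcoef_E].
  left. apply Rdiv_lt_0_compat; [apply Hg; lia|apply pow_lt, delta_pos].
Qed.

Lemma coefS_0 : coefS 0 = 1.
Proof. unfold coefS, gam. simpl. field. Qed.

Lemma coefS_bounds i : (i < S n)%nat -> i <> 0%nat -> 0 <= coefS i <= coef_bound.
Proof.
  intros Hi Hi0. unfold coefS, gam. destruct (Nat.eqb_spec i 0); [lia|].
  split; [|left; apply Hcoef_S; lia].
  left. apply Rdiv_lt_0_compat; [apply Hg; lia|apply pow_lt, delta_pos].
Qed.

Lemma sratio_pow_rescaled x i : (i <= n)%nat ->
  srS i * (x / delta) ^ i = coefS i * (sr0 i * x ^ i).
Proof.
  intros Hi. rewrite sratio_rescaled by lia. pose proof (pow_lt delta i delta_pos).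
  replace ((x / delta) ^ i) with (x ^ i / delta ^ i)
    by (unfold Rdiv; rewrite Rpow_mult_distr, pow_inv; reflexivity).
  unfold coefS. field. lra.
Qed.

Lemma kE_sratio_pow_rescaled x i : (i < n)%nat ->
  kES i * srS i * (x / delta) ^ i = coefE i * (kE0 i * sr0 i * x ^ i).
Proof.
  intros Hi. rewrite Rmult_assoc, sratio_pow_rescaled, kE_rescaled by lia.
  pose proof (gam_pos i ltac:(lia)). pose proof (pow_lt delta i delta_pos).
  unfold coefE, coefS. field. lra.
Qed.

Lemma pE_rescaled w : 0 < w ->
  exists p, pES (w / delta) = c1 * w + p /\ 0 <= p <= coef_bound * pE0 w.
Proof.
  intros Hw. destruct coef_bound_spec as [Hm _].
  destruct (sumR_dominant n 1 coefE (fun i => kE0 i * sr0 i * w ^ i) coef_bound)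
    as [p [Hp Hpb]]; try lia; auto using coefE_1, coefE_bounds with real.
  { intros i Hi. pose proof (kE_sratio_pos i Hi). pose proof (pow_lt w i Hw). left. nra. }
  exists p. split; [|exact Hpb]. unfold pE.
  rewrite (sumR_ext n _ (fun i => coefE i * (kE0 i * sr0 i * w ^ i))), Hp, pow_1;
    [reflexivity|]. intros i Hi. now apply kE_sratio_pow_rescaled.
Qed.

Lemma pF_rescaled w : 0 < w ->
  exists q, pFS (w / delta) = r1 * c1 * w + q /\ 0 <= q <= coef_bound * pF0 w.
Proof.
  intros Hw. destruct coef_bound_spec as [Hm _].
  destruct (sumR_dominant n 1 coefE (fun i => rcat kcat lcat i * kE0 i * sr0 i * w ^ i)
    coef_bound) as [q [Hq Hqb]]; try lia; auto using coefE_1, coefE_bounds with real.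
  { intros i Hi. pose proof (kE_sratio_pos i Hi). pose proof (pow_lt w i Hw).
    pose proof (rcat_pos n kcat lcat Hkcat Hlcat i Hi).
    replace (rcat kcat lcat i * kE0 i * sr0 i * w ^ i)
      with (rcat kcat lcat i * (kE0 i * sr0 i) * w ^ i) by ring.
    left. apply Rmult_lt_0_compat; [apply Rmult_lt_0_compat|]; auto. }
  exists q. split; [|exact Hqb]. unfold pF.
  rewrite (sumR_ext n _ (fun i => coefE i * (rcat kcat lcat i * kE0 i * sr0 i * w ^ i))), Hq,
    pow_1; [unfold c1, r1; ring|].
  intros i Hi. rewrite !Rmult_assoc, <- (Rmult_assoc (kES i)), kE_sratio_pow_rescaled by auto.
  ring.
Qed.

Lemma pS_rescaled w : 0 < w ->
  exists s, pSS (w / delta) = 1 + s /\ 0 <= s <= coef_bound * pS0 w.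
Proof.
  intros Hw. destruct coef_bound_spec as [Hm _].
  destruct (sumR_dominant (S n) 0 coefS (fun i => sr0 i * w ^ i) coef_bound)
    as [s [Hs Hsb]]; try lia; auto using coefS_0, coefS_bounds with real.
  { intros i Hi. assert (0 < sr0 i) by (apply (sratio_pos n); auto; lia).
    pose proof (pow_lt w i Hw). left. nra. }
  exists s. split; [|exact Hsb]. unfold pS.
  rewrite (sumR_ext (S n) _ (fun i => coefS i * (sr0 i * w ^ i))), Hs; [simpl; ring|].
  intros i Hi. apply sratio_pow_rescaled. lia.
Qed.

Lemma rescaled_resid w : 0 < w <= wh -> admissible Ftot Etot c1 r1 w eta ->
  0 < efreeS (w / delta) /\
  bal_lo Ftot Etot Stot c1 r1 w eta <= residS (w / delta) / efreeS (w / delta)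
    <= bal_hi Ftot Etot Stot c1 r1 w eta.
Proof.
  intros Hw Hadm.
  destruct coef_bound_spec as [Hm [HmEF HmS]].
  destruct (polys_le w Hw) as [HpE [HpF HpS]].
  destruct (pE_rescaled w ltac:(lra)) as [p [Ep Hp]].
  destruct (pF_rescaled w ltac:(lra)) as [q [Eq Hq]].
  destruct (pS_rescaled w ltac:(lra)) as [s [Es Hs]].
  assert (Hd : 0 < delta <= eta).
  { split; [apply delta_pos|]. pose proof (Rmin_l eta (wl / xmin n kcat lcat Etot Ftot)).
    unfold scale_bound in Hdelta. lra. }
  edestruct (balance_bounds Ftot Etot Stot c1 r1 w) with (d := delta) (p := p) (q := q) (s := s)
    as [He Hbal]; eauto using c1_pos, r1_pos; [lra|lra|lra|nra|nra|].
  assert (Hz : zetaS (w / delta)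
    = (w / delta * Ftot - Etot) / (w / delta * (r1 * c1 * w + q) - (c1 * w + p)))
    by (unfold zeta; rewrite Ep, Eq; reflexivity).
  assert (He' : efreeS (w / delta) = Etot - zetaS (w / delta) * (c1 * w + p))
    by (unfold efree; rewrite Ep; reflexivity).
  rewrite <- Hz, <- He' in *.
  split; [auto|]. rewrite resid_div_efree by auto.
  rewrite Ep, Eq, Es. exact Hbal.
Qed.

Lemma rescaled_multistationary : multistationary n konS koff kcat lonS loff lcat Stot Etot Ftot.
Proof.
  pose proof wl_pos. pose proof wl_lt_wh. pose proof delta_pos.
  destruct (rescaled_resid wl ltac:(lra) Hadm_l) as [Hel [Hl _]].
  destruct (rescaled_resid wh ltac:(lra) Hadm_h) as [Heh [_ Hh]].
  apply (multistationary_of_sign_change n konS koff kcat lonS loff lcat)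
    with (xl := wl / delta) (xw := wh / delta); auto using konS_pos, lonS_pos; try lia.
  - destruct (xmin_spec n kcat lcat Hkcat Hlcat Etot Ftot HE HF _ (Rle_refl _)) as [Hx1 _].
    pose proof (Rmin_r eta (wl / xmin n kcat lcat Etot Ftot)). unfold scale_bound in Hdelta.
    apply Rlt_le, Rlt_div_swap; lra.
  - unfold Rdiv. apply Rmult_lt_compat_r; [apply Rinv_0_lt_compat|]; auto.
  - set (x := wl / delta) in *.
    replace (residS x) with (residS x / efreeS x * efreeS x) by (field; lra).
    apply Rmult_lt_0_compat; lra.
  - set (x := wh / delta) in *.
    replace (residS x) with (residS x / efreeS x * efreeS x) by (field; lra). nra.
Qed.

End Rescaling.

Lemma gamma_rescaling n Stot Etot Ftot (kon koff kcat lon loff lcat : nat -> R) :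
  (2 <= n)%nat -> 0 < Stot -> 0 < Etot -> 0 < Ftot -> Stot > Ftot ->
  pos_rates n kon -> pos_rates n koff -> pos_rates n kcat ->
  pos_rates n lon -> pos_rates n loff -> pos_rates n lcat ->
  kcat 1%nat / lcat 1%nat > Rmax (Ftot / (Stot - Ftot)) (Ftot / Etot) ->
  exists m, 0 < m /\ forall g : nat -> R,
    (forall i, (1 <= i <= 2 * n)%nat -> 0 < g i) ->
    (forall i, (1 <= i <= 2 * n)%nat -> g i < m) ->
    (forall i, (1 <= i <= n)%nat -> g i / g (n + 2)%nat ^ i < m) ->
    (forall i, (3 <= i <= n)%nat -> g (n + i)%nat / g (n + 2)%nat ^ (i - 1) < m) ->
    multistationary n (konS n kon g) koff kcat (lonS n lon g) loff lcat Stot Etot Ftot.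
Proof.
  intros Hn HS HE HF HSF Hkon Hkoff Hkcat Hlon Hloff Hlcat Hr.
  assert (HrS : Ftot / (Stot - Ftot) < rcat kcat lcat 1)
    by (pose proof (Rmax_l (Ftot / (Stot - Ftot)) (Ftot / Etot)); unfold rcat; lra).
  assert (HrE : Ftot / Etot < rcat kcat lcat 1)
    by (pose proof (Rmax_r (Ftot / (Stot - Ftot)) (Ftot / Etot)); unfold rcat; lra).
  pose proof (c1_pos n kon koff kcat lon loff lcat Hn Hkon Hkoff Hkcat Hlon Hloff Hlcat).
  destruct (exists_eta Ftot Etot Stot (kE kon koff kcat 1 * sratio kon koff kcat lon loff lcat 1)
    (rcat kcat lcat 1)) as [eta [Heta [Hadm_l [Hadm_h [Hbal_l Hbal_h]]]]]; auto.
  set (mE := coef_bound n kon koff kcat lon loff lcat Stot Etot Ftot eta).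
  set (mS := scale_bound n kon koff kcat lon loff lcat Stot Etot Ftot eta).
  exists (Rmin mE mS). split.
  - apply Rmin_pos; [apply (coef_bound_spec n kon koff kcat lon loff lcat Stot Etot Ftot)|
      apply (scale_bound_pos n kon koff kcat lon loff lcat Stot Etot Ftot)]; auto.
  - intros g Hg Hsmall Hratio_S Hratio_E.
    pose proof (Rmin_l mE mS). pose proof (Rmin_r mE mS).
    apply (rescaled_multistationary n kon koff kcat lon loff lcat Stot Etot Ftot) with eta; auto.
    + pose proof (Hsmall (n + 2)%nat ltac:(lia)). fold mS. lra.
    + intros i Hi Hi1. fold mE. destruct i as [|i].
      * rewrite Nat.add_0_r, pow_O, Rdiv_1_r. pose proof (Hsmall (n + 1)%nat ltac:(lia)). lra.
      * pose proof (Hratio_E (S (S i)) ltac:(lia)) as Hi2.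
        replace (n + S (S i))%nat with (n + 1 + S i)%nat in Hi2 by lia.
        replace (S (S i) - 1)%nat with (S i) in Hi2 by lia. lra.
    + intros i Hi. fold mE. pose proof (Hratio_S i Hi). lra.
Qed.

Lemma konS_Rpower n (kon h : nat -> R) t :
  konS n kon (fun k => Rpower t (h (k + 3)%nat))
  = fun i => (if Nat.eqb i 0 then Rpower t (h (n + 4)%nat)
              else Rpower t (h (n + 4 + i)%nat - h (i + 3)%nat)) * kon i.
Proof.
  apply functional_extensionality. intros i. unfold konS.
  replace (n + 1 + 3)%nat with (n + 4)%nat by lia.
  replace (n + 1 + i + 3)%nat with (n + 4 + i)%nat by lia.
  destruct (Nat.eqb i 0); [reflexivity|]. now rewrite Rpower_div.
Qed.

Lemma lonS_Rpower n (lon h : nat -> R) t :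
  lonS n lon (fun k => Rpower t (h (k + 3)%nat))
  = fun i => Rpower t (h (n + 4 + i)%nat - h (i + 4)%nat) * lon i.
Proof.
  apply functional_extensionality. intros i. unfold lonS.
  replace (n + 1 + i + 3)%nat with (n + 4 + i)%nat by lia.
  replace (i + 1 + 3)%nat with (i + 4)%nat by lia. now rewrite Rpower_div.
Qed.

Lemma power_rescaling n Stot Etot Ftot (kon koff kcat lon loff lcat h : nat -> R) :
  (2 <= n)%nat -> 0 < Stot -> 0 < Etot -> 0 < Ftot -> Stot > Ftot ->
  pos_rates n kon -> pos_rates n koff -> pos_rates n kcat ->
  pos_rates n lon -> pos_rates n loff -> pos_rates n lcat ->
  kcat 1%nat / lcat 1%nat > Rmax (Ftot / (Stot - Ftot)) (Ftot / Etot) ->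
  (forall j, (4 <= j <= 2 * n + 3)%nat -> 0 < h j) ->
  (forall i, (1 <= i <= n)%nat -> INR i * h (n + 5)%nat < h (i + 3)%nat) ->
  (forall i, (1 <= i <= n)%nat -> i <> 2%nat ->
     INR (i - 1) * h (n + 5)%nat < h (n + i + 3)%nat) ->
  near0 (fun t => multistationary n
    (fun i => (if Nat.eqb i 0 then Rpower t (h (n + 4)%nat)
               else Rpower t (h (n + 4 + i)%nat - h (i + 3)%nat)) * kon i)
    koff kcat (fun i => Rpower t (h (n + 4 + i)%nat - h (i + 4)%nat) * lon i)
    loff lcat Stot Etot Ftot).
Proof.
  intros Hn HS HE HF HSF Hkon Hkoff Hkcat Hlon Hloff Hlcat Hr Hh HhS HhE.
  destruct (gamma_rescaling n Stot Etot Ftot kon koff kcat lon loff lcat) as [m [Hm Hms]]; auto.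
  assert (Hsmall : near0 (fun t => forall i, (1 <= i <= 2 * n)%nat ->
    Rpower t (h (i + 3)%nat) < m)).
  { apply (near0_Rpower_lt_all _ (2 * n)); auto; intros i Hi; [lia|]. apply Hh. lia. }
  assert (HratioS : near0 (fun t => forall i, (1 <= i <= n)%nat ->
    Rpower t (h (i + 3)%nat - INR i * h (n + 5)%nat) < m)).
  { apply (near0_Rpower_lt_all _ n); auto; intros i Hi; [lia|]. pose proof (HhS i Hi). lra. }
  assert (HratioE : near0 (fun t => forall i, (3 <= i <= n)%nat ->
    Rpower t (h (n + i + 3)%nat - INR (i - 1) * h (n + 5)%nat) < m)).
  { apply (near0_Rpower_lt_all _ n); auto; intros i Hi; [lia|].
    pose proof (HhE i ltac:(lia) ltac:(lia)). lra. }
  refine (near0_mono _ _ _ (near0_and _ _ Hsmall (near0_and _ _ HratioS HratioE))).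
  intros t Ht [Hs [HrS HrE]].
  rewrite <- konS_Rpower, <- lonS_Rpower. apply Hms.
  - intros. apply exp_pos.
  - exact Hs.
  - intros i Hi. rewrite Rpower_div_pow. replace (n + 2 + 3)%nat with (n + 5)%nat by lia. auto.
  - intros i Hi. rewrite Rpower_div_pow. replace (n + 2 + 3)%nat with (n + 5)%nat by lia. auto.
Qed.

Lemma power_exponents_exist n : (2 <= n)%nat -> exists h : nat -> R,
  (forall j, (4 <= j <= 2 * n + 3)%nat -> 0 < h j) /\
  (forall i, (1 <= i <= n)%nat -> INR i * h (n + 5)%nat < h (i + 3)%nat) /\
  (forall i, (1 <= i <= n)%nat -> i <> 2%nat ->
     INR (i - 1) * h (n + 5)%nat < h (n + i + 3)%nat).
Proof.
  intros Hn. exists (fun k => if Nat.eqb k (n + 5) then 1 else INR (2 * n + 2)).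
  assert (Hbig : forall i, (i <= n)%nat -> INR i < INR (2 * n + 2)) by (intros; apply lt_INR; lia).
  split; [|split].
  - intros j _. destruct (Nat.eqb j (n + 5)); [lra|]. apply lt_0_INR. lia.
  - intros i Hi. rewrite Nat.eqb_refl, Rmult_1_r.
    destruct (Nat.eqb_spec (i + 3) (n + 5)); [lia|]. apply Hbig. lia.
  - intros i Hi Hi2. rewrite Nat.eqb_refl, Rmult_1_r.
    destruct (Nat.eqb_spec (n + i + 3) (n + 5)); [lia|]. apply Hbig. lia.
Qed.

Lemma multistationary_rates_exist n Stot Etot Ftot :
  (2 <= n)%nat -> 0 < Stot -> 0 < Etot -> 0 < Ftot -> Stot > Ftot ->
  exists kon koff kcat lon loff lcat : nat -> R,
    pos_rates n kon /\ pos_rates n koff /\ pos_rates n kcat /\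
    pos_rates n lon /\ pos_rates n loff /\ pos_rates n lcat /\
    multistationary n kon koff kcat lon loff lcat Stot Etot Ftot.
Proof.
  intros Hn HS HE HF HSF.
  set (one := fun _ : nat => 1).
  set (K := 1 + Ftot / (Stot - Ftot) + Ftot / Etot).
  set (kcat := fun i => if Nat.eqb i 1 then K else 1).
  assert (Hone : pos_rates n one) by (intros i _; unfold one; lra).
  assert (HK : 0 < Ftot / (Stot - Ftot) /\ 0 < Ftot / Etot)
    by (split; apply Rdiv_lt_0_compat; lra).
  assert (Hkcat : pos_rates n kcat)
    by (intros i _; unfold kcat; destruct (Nat.eqb i 1); unfold K; lra).
  assert (Hr : kcat 1%nat / one 1%nat > Rmax (Ftot / (Stot - Ftot)) (Ftot / Etot)).
  { unfold kcat, one. simpl. rewrite Rdiv_1_r. apply Rmax_lub_lt; unfold K; lra. }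
  destruct (power_exponents_exist n Hn) as [h [Hh [HhS HhE]]].
  destruct (near0_witness _ (power_rescaling n Stot Etot Ftot one one kcat one one one h
    Hn HS HE HF HSF Hone Hone Hkcat Hone Hone Hone Hr Hh HhS HhE)) as [t [Ht Hms]].
  do 6 eexists. split; [|split; [exact Hone|split; [exact Hkcat|split; [|split; [exact Hone|
    split; [exact Hone|exact Hms]]]]]].
  - intros i _. apply Rmult_lt_0_compat; [destruct (Nat.eqb i 0); apply exp_pos|unfold one; lra].
  - intros i _. apply Rmult_lt_0_compat; [apply exp_pos|unfold one; lra].
Qed.

Theorem theorem4p1 :
  forall (n : nat) (Stot Etot Ftot : R),
  (2 <= n)%nat -> 0 < Stot -> 0 < Etot -> 0 < Ftot -> Stot > Ftot ->
  (* (1) some choice of rate constants gives multistationarity *)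
  (exists kon koff kcat lon loff lcat : nat -> R,
     pos_rates n kon /\ pos_rates n koff /\ pos_rates n kcat /\
     pos_rates n lon /\ pos_rates n loff /\ pos_rates n lcat /\
     multistationary n kon koff kcat lon loff lcat Stot Etot Ftot)
  /\
  (* (2) rescaling by powers of t *)
  (forall (kon koff kcat lon loff lcat : nat -> R) (h : nat -> R),
     pos_rates n kon -> pos_rates n koff -> pos_rates n kcat ->
     pos_rates n lon -> pos_rates n loff -> pos_rates n lcat ->
     kcat 1%nat / lcat 1%nat > Rmax (Ftot / (Stot - Ftot)) (Ftot / Etot) ->
     (forall j, (4 <= j <= 2 * n + 3)%nat -> 0 < h j) ->
     (forall i, (1 <= i <= n)%nat -> INR i * h (n + 5)%nat < h (i + 3)%nat) ->
     (forall i, (1 <= i <= n)%nat -> i <> 2%nat ->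
        INR (i - 1) * h (n + 5)%nat < h (n + i + 3)%nat) ->
     exists t0, 0 < t0 /\
       forall t, 0 < t < t0 ->
         multistationary n
           (fun i => (if Nat.eqb i 0 then Rpower t (h (n + 4)%nat)
                      else Rpower t (h (n + 4 + i)%nat - h (i + 3)%nat)) * kon i)
           koff kcat
           (fun i => Rpower t (h (n + 4 + i)%nat - h (i + 4)%nat) * lon i)
           loff lcat Stot Etot Ftot)
  /\
  (* (3) rescaling by small parameters gamma *)
  (forall (kon koff kcat lon loff lcat : nat -> R),
     pos_rates n kon -> pos_rates n koff -> pos_rates n kcat ->
     pos_rates n lon -> pos_rates n loff -> pos_rates n lcat ->
     kcat 1%nat / lcat 1%nat > Rmax (Ftot / (Stot - Ftot)) (Ftot / Etot) ->
     exists M : nat -> R,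
       (forall j, (1 <= j <= 4 * n - 2)%nat -> 0 < M j) /\
       forall g : nat -> R,
         (forall i, (1 <= i <= 2 * n)%nat -> 0 < g i) ->
         (forall i, (1 <= i <= 2 * n)%nat -> g i < M i) ->
         (forall i, (1 <= i <= n)%nat ->
            g i / g (n + 2)%nat ^ i < M (2 * n + i)%nat) ->
         (forall i, (3 <= i <= n)%nat ->
            g (n + i)%nat / g (n + 2)%nat ^ (i - 1) < M (3 * n - 2 + i)%nat) ->
         multistationary n
           (fun i => (if Nat.eqb i 0 then g (n + 1)%nat
                      else g (n + 1 + i)%nat / g i) * kon i)
           koff kcat
           (fun i => g (n + 1 + i)%nat / g (i + 1)%nat * lon i)
           loff lcat Stot Etot Ftot).
Proof.
  intros n Stot Etot Ftot Hn HS HE HF HSF.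
  split; [|split].
  - now apply multistationary_rates_exist.
  - intros kon koff kcat lon loff lcat h. now apply power_rescaling.
  - intros kon koff kcat lon loff lcat Hkon Hkoff Hkcat Hlon Hloff Hlcat Hr.
    destruct (gamma_rescaling n Stot Etot Ftot kon koff kcat lon loff lcat) as [m [Hm Hms]]; auto.
    exists (fun _ => m). split; [auto|]. exact Hms.
Qed.
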